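(* Let $G$ be an $n\times n$ bimatrix game with payoff matrices $R,C\in[0,1]^{n\times n}$, and let $\epsilon,\Delta\ge 0$. Then $G$ satisfies the well-supported $(2\epsilon,\Delta)$-approximation stability condition if and only if $G$ satisfies the $(\epsilon,\Delta)$-stability to perturbations condition.
   Context: The row player receives $R_{i,j}$ and the column player $C_{i,j}$ when row plays $i$ and column plays $j$. Mixed strategies $p,q$ are probability vectors in $\mathbb{R}^n$; payoffs are $p^TRq$ and $p^TCq$; $e_i$ denotes the $i$-th unit vector; $\mathrm{supp}(p)=\{i:p_i>0\}$. $(p,q)$ is a Nash equilibrium if $e_i^TRq\le p^TRq$ and $p^TCe_j\le p^TCq$ for all $i,j$. $(p,q)$ is a well-supported $\epsilon$-equilibrium if for every $i\in\mathrm{supp}(p)$ and every $j$, $e_i^TRq\ge e_j^TRq-\epsilon$, and for every $i\in\mathrm{supp}(q)$ and every $j$, $p^TCe_i\ge p^TCe_j-\epsilon$. The distance is $d(p,p')=\frac12\sum_i|p_i-p'_i|$ and $d((p,q),(p',q'))=\max(d(p,p'),d(q,q'))$; $(p,q)$ is $\Delta$-close to $(p',q')$ if this distance is at most $\Delta$. A game $G'$ with matrices $R',C'$ is an $L_\infty$ $\alpha$-perturbation of $G$ if $|R_{i,j}-R'_{i,j}|\le\alpha$ and $|C_{i,j}-C'_{i,j}|\le\alpha$ for all $i,j$ (entries of $G'$ need not lie in $[0,1]$). $G$ satisfies the $(\epsilon,\Delta)$-stability to perturbations condition if for every $L_\infty$ $\epsilon$-perturbation $G'$ of $G$ and every Nash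 equilibrium $(p,q)$ of $G'$ there is a Nash equilibrium of $G$ that is $\Delta$-close to $(p,q)$. $G$ satisfies the well-supported $(\epsilon,\Delta)$-approximation stability condition if every well-supported $\epsilon$-equilibrium of $G$ is $\Delta$-close to some Nash equilibrium of $G$. *)

From mathcomp Require Import all_boot all_order all_algebra.
From mathcomp Require Import reals.
Set Implicit Arguments. Unset Strict Implicit. Unset Printing Implicit Defensive.
Import Order.TTheory GRing.Theory Num.Theory.
Local Open Scope ring_scope.

Section Games.
Variables (R : realType) (n : nat).

Definition mixed (p : 'I_n -> R) : Prop :=
  (forall i, 0 <= p i) /\ \sum_(i < n) p i = 1.

Definition bil (p : 'I_n -> R) (A : 'M[R]_n) (q : 'I_n -> R) : R :=
  \sum_(i < n) \sum_(j < n) p i * A i j * q j.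

Definition rowpay (A : 'M[R]_n) (i : 'I_n) (q : 'I_n -> R) : R :=
  \sum_(j < n) A i j * q j.

Definition colpay (p : 'I_n -> R) (A : 'M[R]_n) (j : 'I_n) : R :=
  \sum_(i < n) p i * A i j.

Definition is_NE (Rm Cm : 'M[R]_n) (p q : 'I_n -> R) : Prop :=
  mixed p /\ mixed q /\
  (forall i, rowpay Rm i q <= bil p Rm q) /\
  (forall j, colpay p Cm j <= bil p Cm q).

Definition is_WSNE (eps : R) (Rm Cm : 'M[R]_n) (p q : 'I_n -> R) : Prop :=
  mixed p /\ mixed q /\
  (forall i j, 0 < p i -> rowpay Rm j q - eps <= rowpay Rm i q) /\
  (forall i j, 0 < q i -> colpay p Cm j - eps <= colpay p Cm i).

Definition dist (p p' : 'I_n -> R) : R :=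
  2^-1 * \sum_(i < n) `|p i - p' i|.

Definition close (Delta : R) (p q p' q' : 'I_n -> R) : Prop :=
  Num.max (dist p p') (dist q q') <= Delta.

Definition perturbation (alpha : R) (Rm Cm Rm' Cm' : 'M[R]_n) : Prop :=
  forall i j, `|Rm i j - Rm' i j| <= alpha /\ `|Cm i j - Cm' i j| <= alpha.

Definition stable_to_perturbations (eps Delta : R) (Rm Cm : 'M[R]_n) : Prop :=
  forall Rm' Cm' : 'M[R]_n, perturbation eps Rm Cm Rm' Cm' ->
  forall p q, is_NE Rm' Cm' p q ->
  exists p' q', is_NE Rm Cm p' q' /\ close Delta p q p' q'.

Definition ws_approx_stable (eps Delta : R) (Rm Cm : 'M[R]_n) : Prop :=
  forall p q, is_WSNE eps Rm Cm p q ->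
  exists p' q', is_NE Rm Cm p' q' /\ close Delta p q p' q'.

Definition in01 (A : 'M[R]_n) : Prop := forall i j, 0 <= A i j <= 1.

End Games.

(* A Nash equilibrium (p, q) of an eps-perturbation is a best response, on its
   support, to payoffs that are within eps of the original ones, so it is a
   well-supported 2eps-equilibrium of the original game.  Conversely, given a
   well-supported 2eps-equilibrium, let m be the best row payoff against q:
   every supported row earns at least m - 2eps, so adding m - eps - r_i to the
   payoffs of supported rows and -eps to the others is an eps-perturbation in
   which all supported rows earn exactly m - eps and no row earns more; the
   same is done for the columns, and (p, q) becomes an exact equilibrium. *)
From mathcomp Require Import all_boot all_order all_algebra.
From mathcomp Require Import reals.
From mathcomp Require Import lra.
Set Implicit Arguments.
Unset Strict Implicit.
Unset Printing Implicit Defensive.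

Import Order.TTheory GRing.Theory Num.Theory.
Local Open Scope ring_scope.

Section Games.
Variables (R : realType) (n : nat).
Implicit Types (p q : 'I_n -> R) (r s c : 'I_n -> R) (A B : 'M[R]_n).

Definition wavg p r : R := \sum_(k < n) p k * r k.

Definition best_response p r : Prop := forall i, r i <= wavg p r.

Definition well_supported (e : R) p r : Prop :=
  forall i j, 0 < p i -> r j - e <= r i.

Lemma mixed_support p : mixed p -> exists i, 0 < p i.
Proof.
move=> [p_ge0 p_sum1]; apply/existsP; apply: contraT => /existsPn p_le0.
suff : \sum_i p i <= 0 by rewrite p_sum1 ler10.
by apply: sumr_le0 => i _; rewrite leNgt (negbTE (p_le0 i)).
Qed.

Lemma wavg_addr p r (a : R) : mixed p -> wavg p (fun k => r k + a) = wavg p r + a.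
Proof.
move=> [_ p_sum1]; rewrite /wavg (eq_bigr (fun k => p k * r k + p k * a)).
  by rewrite big_split /= -mulr_suml p_sum1 mul1r.
by move=> k _; rewrite mulrDr.
Qed.

Lemma wavg_cst p (a : R) : mixed p -> wavg p (fun=> a) = a.
Proof. by move=> [_ p_sum1]; rewrite /wavg -mulr_suml p_sum1 mul1r. Qed.

Lemma norm_wavg_le p r (e : R) : mixed p -> (forall k, `|r k| <= e) ->
  `|wavg p r| <= e.
Proof.
move=> [p_ge0 p_sum1] r_le; apply: le_trans (ler_norm_sum _ _ _) _.
apply: le_trans (_ : \sum_k p k * e <= e).
  by apply: ler_sum => k _; rewrite normrM (ger0_norm (p_ge0 k)) ler_wpM2l.
by rewrite -mulr_suml p_sum1 mul1r.
Qed.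

Lemma best_response_support p r : mixed p -> best_response p r ->
  forall i, 0 < p i -> r i = wavg p r.
Proof.
move=> mp r_le i p_i_gt0.
have gap0 : \sum_k p k * (wavg p r - r k) = 0.
  rewrite (eq_bigr (fun k => p k * wavg p r - p k * r k)).
    by rewrite sumrB -mulr_suml mp.2 mul1r subrr.
  by move=> k _; rewrite mulrBr.
have gap_ge0 k : true -> 0 <= p k * (wavg p r - r k).
  by move=> _; rewrite mulr_ge0 ?mp.1 // subr_ge0.
have /eqP := psumr_eq0P gap_ge0 gap0 isT (i := i).
by rewrite mulf_eq0 (gt_eqF p_i_gt0) /= subr_eq0 => /eqP.
Qed.

Lemma best_response_close_well_supported p r s (e : R) : mixed p ->
  (forall k, `|r k - s k| <= e) -> best_response p s -> well_supported (2 * e) p r.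
Proof.
move=> mp rs_le s_br i j p_i_gt0.
have s_i := best_response_support mp s_br p_i_gt0.
have := s_br j; have := rs_le i; have := rs_le j.
by rewrite s_i !ler_norml => /andP[? ?] /andP[? ?]; lra.
Qed.

Lemma well_supported_shift_best_response p r (e : R) : 0 <= e -> mixed p ->
  well_supported (2 * e) p r ->
  exists c, (forall k, `|c k| <= e) /\ best_response p (fun k => r k + c k).
Proof.
move=> e_ge0 mp r_ws; have [i0 _] := mixed_support mp.
pose m := \big[Num.max/r i0]_k r k.
have r_le_m k : r k <= m by apply: le_bigmax.
have m_le i : 0 < p i -> m <= r i + 2 * e.
  move=> p_i_gt0; apply: bigmax_le => [|k _].
    by have := r_ws i i0 p_i_gt0; lra.
  by have := r_ws i k p_i_gt0; lra.
exists (fun k => if 0 < p k then m - e - r k else - e); split.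
  move=> k; case: ifP => [p_k_gt0|_]; last by rewrite normrN ger0_norm.
  by rewrite ler_norml; have := r_le_m k; have := m_le k p_k_gt0; lra.
rewrite /best_response /=.
have -> : wavg p (fun k => r k + (if 0 < p k then m - e - r k else - e)) = m - e.
  rewrite -[RHS](wavg_cst _ mp); apply: eq_bigr => k _.
  case: ifP => [_|p_k_le0]; first by congr (_ * _); lra.
  suff -> : p k = 0 by rewrite !mul0r.
  by apply/eqP; rewrite eq_le mp.1 andbT leNgt p_k_le0.
by move=> k; case: ifP => _; [lra | have := r_le_m k; lra].
Qed.

Lemma bil_rowpay p A q : bil p A q = wavg p (fun i => rowpay A i q).
Proof.
apply: eq_bigr => i _; rewrite /rowpay mulr_sumr.
by apply: eq_bigr => j _; rewrite mulrA.
Qed.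

Lemma bil_colpay p A q : bil p A q = wavg q (fun j => colpay p A j).
Proof.
rewrite /bil exchange_big; apply: eq_bigr => j _; rewrite /colpay mulr_sumr.
by apply: eq_bigr => i _; rewrite mulrC.
Qed.

Lemma is_NE_best_response A B p q : is_NE A B p q <->
  [/\ mixed p, mixed q, best_response p (fun i => rowpay A i q)
    & best_response q (fun j => colpay p B j)].
Proof.
by rewrite /is_NE /best_response bil_rowpay bil_colpay; split=> [[? [? [? ?]]]|[? ? ? ?]].
Qed.

Lemma is_WSNE_well_supported (e : R) A B p q : is_WSNE e A B p q <->
  [/\ mixed p, mixed q, well_supported e p (fun i => rowpay A i q)
    & well_supported e q (fun j => colpay p B j)].
Proof. by split=> [[? [? [? ?]]]|[? ? ? ?]]. Qed.

Lemma rowpay_close A B (e : R) q : mixed q ->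
  (forall i j, `|A i j - B i j| <= e) ->
  forall i, `|rowpay A i q - rowpay B i q| <= e.
Proof.
move=> mq AB_le i; rewrite /rowpay -sumrB.
rewrite (eq_bigr (fun j => q j * (A i j - B i j))); first exact: norm_wavg_le.
by move=> j _; rewrite mulrBr ![q j * _]mulrC.
Qed.

Lemma colpay_close A B (e : R) p : mixed p ->
  (forall i j, `|A i j - B i j| <= e) ->
  forall j, `|colpay p A j - colpay p B j| <= e.
Proof.
move=> mp AB_le j; rewrite /colpay -sumrB.
by rewrite (eq_bigr (fun i => p i * (A i j - B i j))) ?norm_wavg_le // => i _;
  rewrite mulrBr.
Qed.

Lemma rowpay_shift A c q i : mixed q ->
  rowpay (\matrix_(i, j) (A i j + c i)) i q = rowpay A i q + c i.
Proof.
move=> mq; have /= := wavg_addr (fun j => A i j) (c i) mq; rewrite /wavg /rowpay.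
move=> shift; rewrite (eq_bigr (fun j => q j * (A i j + c i))) => [|j _].
  by rewrite shift; congr (_ + _); apply: eq_bigr => j _; rewrite mulrC.
by rewrite mxE mulrC.
Qed.

Lemma colpay_shift A c p j : mixed p ->
  colpay p (\matrix_(i, j) (A i j + c j)) j = colpay p A j + c j.
Proof.
move=> mp; have /= := wavg_addr (fun i => A i j) (c j) mp; rewrite /wavg /colpay.
by move=> <-; apply: eq_bigr => i _; rewrite mxE.
Qed.

Lemma perturbation_NE_is_WSNE (e : R) A B A' B' p q :
  perturbation e A B A' B' -> is_NE A' B' p q -> is_WSNE (2 * e) A B p q.
Proof.
move=> AB'_le /is_NE_best_response[mp mq row_br col_br].
apply/is_WSNE_well_supported; split=> //.
  apply: best_response_close_well_supported row_br => //.
  by apply: rowpay_close => // i j; case: (AB'_le i j).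
apply: best_response_close_well_supported col_br => //.
by apply: colpay_close => // i j; case: (AB'_le i j).
Qed.

Lemma WSNE_is_perturbation_NE (e : R) A B p q : 0 <= e ->
  is_WSNE (2 * e) A B p q ->
  exists A' B', perturbation e A B A' B' /\ is_NE A' B' p q.
Proof.
move=> e_ge0 /is_WSNE_well_supported[mp mq row_ws col_ws].
have [c [c_le row_br]] := well_supported_shift_best_response e_ge0 mp row_ws.
have [d [d_le col_br]] := well_supported_shift_best_response e_ge0 mq col_ws.
exists (\matrix_(i, j) (A i j + c i)), (\matrix_(i, j) (B i j + d j)); split.
  by move=> i j; rewrite !mxE !opprD !addNKr !normrN.
apply/is_NE_best_response; split=> // [i|j]; rewrite /wavg.
  rewrite rowpay_shift // (eq_bigr (fun k => p k * (rowpay A k q + c k))) => [|k _].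
    exact: (row_br i).
  by rewrite rowpay_shift.
rewrite colpay_shift // (eq_bigr (fun k => q k * (colpay p B k + d k))) => [|k _].
  exact: (col_br j).
by rewrite colpay_shift.
Qed.

End Games.

Theorem theorem1 (R : realType) (n : nat) (Rm Cm : 'M[R]_n) (eps Delta : R) :
  in01 Rm -> in01 Cm -> 0 <= eps -> 0 <= Delta ->
  (ws_approx_stable (2 * eps) Delta Rm Cm <-> stable_to_perturbations eps Delta Rm Cm).
Proof.
move=> _ _ eps_ge0 _; split.
  move=> ws_stable Rm' Cm' pert p q NE'.
  exact/ws_stable/(perturbation_NE_is_WSNE pert NE').
move=> pert_stable p q WSNE.
have [Rm' [Cm' [pert NE']]] := WSNE_is_perturbation_NE eps_ge0 WSNE.
exact: pert_stable pert p q NE'.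
Qed.
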